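(* Let $k$ be a field of characteristic $0$ and $A$ a $k$-vector space. Then $S_{\le r}A=\bigoplus_{0\le i\le r}S^iA$ for every $r\ge0$.
   Context: $SA=\bigoplus_{n\ge0}S^nA$ is the symmetric algebra of $A$ ($S^0A=k$, $S^nA$ the $n$-th symmetric power, with pure symmetric tensors $a_1\otimes_s\dots\otimes_s a_n$). The linear map $\partial\colon SA\to SA\otimes A$ is given by $\partial(\lambda)=0$ for $\lambda\in S^0A$ and $\partial(a_1\otimes_s\dots\otimes_s a_n)=\sum_{i=1}^n(a_1\otimes_s\dots\otimes_s a_{i-1}\otimes_s a_{i+1}\otimes_s\dots\otimes_s a_n)\otimes a_i$. Iterates: $\partial^0=1_{SA}$ and $\partial^{r+1}:=\partial;(\partial^r\otimes 1_A)\colon SA\to SA\otimes A^{\otimes(r+1)}$. Define $S_{\le r}A:=\ker(\partial^{r+1})\subseteq SA$. *)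

From HB Require Import structures.
From mathcomp Require Import all_boot all_order all_algebra.
From mathcomp Require Import finmap.
From mathcomp.multinomials Require Import monalg.
From Stdlib Require Import ClassicalEpsilon.

Set Implicit Arguments.
Unset Strict Implicit.
Unset Printing Implicit Defensive.

Import GRing.Theory.
Local Open Scope ring_scope.

Definition lext (k : fieldType) (K : choiceType) (V : lmodType k)
  (h : K -> V) (g : {malg k[K]}) : V :=
  \sum_(x <- msupp g) g@_x *: h x.

Definition span (k : fieldType) (V : lmodType k) (G : V -> Prop) : V -> Prop :=
  fun x => exists s : seq (k * V),
    (forall p, p \in s -> G p.2) /\ x = \sum_(p <- s) p.1 *: p.2.

Definition coset (k : fieldType) (V : lmodType k) (W : V -> Prop) (x : V)
  : V -> Prop := fun y => W (y - x).

Definition quot (k : fieldType) (V : lmodType k) (W : V -> Prop) : Type :=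
  {C : V -> Prop | exists x, C = coset W x}.

Definition qpi (k : fieldType) (V : lmodType k) (W : V -> Prop) (x : V)
  : quot W := exist _ (coset W x) (ex_intro _ x erefl).

Definition qrepr (k : fieldType) (V : lmodType k) (W : V -> Prop)
  (C : quot W) : V :=
  proj1_sig (constructive_indefinite_description _ (proj2_sig C)).

Definition remove_at (T : Type) (i : nat) (w : seq T) : seq T :=
  take i w ++ drop i.+1 w.

(* generator of the word w stands for a_1 (x)_s ... (x)_s a_n.          *)
Definition FS (k : fieldType) (A : lmodType k) := {malg k[seq A]}.
Definition gS (k : fieldType) (A : lmodType k) (w : seq A) : FS A := << w >>.

(* The generator stands for (w_1 (x)_s ... (x)_s w_n) (x) t_1 (x)...(x) t_m. *)
Definition FT (k : fieldType) (A : lmodType k) (m : nat) :=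
  {malg k[(seq A * m.-tuple A)%type]}.
Definition gT (k : fieldType) (A : lmodType k) (m : nat) (w t : seq A)
  : FT A m :=
  match (insub t : option (m.-tuple A)) with
  | Some u => << (w, u) >>
  | None => 0
  end.

Definition multilin (k : fieldType) (A : lmodType k) (V : lmodType k)
  (g : seq A -> V) : V -> Prop := fun x =>
  exists (u v : seq A) (a b : A) (c : k),
    x = g (u ++ (c *: a + b) :: v) - c *: g (u ++ a :: v) - g (u ++ b :: v).

(* Relations defining SA = (+)_n S^n A: multilinearity and symmetry. *)
Definition RelS (k : fieldType) (A : lmodType k) : FS A -> Prop :=
  span (fun x => multilin (@gS k A) x \/
                 exists s s' : seq A, perm_eq s s' /\ x = gS s - gS s').

(* Relations defining SA (x) A^{(x) m}: multilinearity in every slot and *)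
(* symmetry in the SA-part.                                              *)
Definition RelT (k : fieldType) (A : lmodType k) (m : nat) : FT A m -> Prop :=
  span (fun x => (exists t, multilin (fun w => gT m w t) x)
              \/ (exists w, multilin (fun t => gT m w t) x)
              \/ exists (s s' t : seq A), perm_eq s s' /\
                                          x = gT m s t - gT m s' t).

Definition SA (k : fieldType) (A : lmodType k) := quot (@RelS k A).
Definition SAT (k : fieldType) (A : lmodType k) (m : nat) := quot (@RelT k A m).

Definition Sn (k : fieldType) (A : lmodType k) (n : nat) : SA A -> Prop :=
  fun C => exists x, span (fun y => exists w : seq A, size w = n /\ y = gS w) x
                     /\ C = qpi (@RelS k A) x.

Definition dfree (k : fieldType) (A : lmodType k) : FS A -> FT A 1 :=
  lext (fun w : seq A =>
          \sum_(i < size w) gT 1 (remove_at i w) [:: nth 0 w i]).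

Definition tens_right (k : fieldType) (A : lmodType k) (m : nat) (a : A)
  : FT A m -> FT A m.+1 :=
  lext (fun p : seq A * m.-tuple A => gT m.+1 p.1 (rcons (val p.2) a)).

(* partial^0 = 1_SA (SA identified with SA (x) A^{(x) 0}),
   partial^{r+1} = partial ; (partial^r (x) 1_A) *)
Fixpoint dpow (k : fieldType) (A : lmodType k) (r : nat) : FS A -> FT A r :=
  match r with
  | 0 => lext (fun w : seq A => gT 0 w [::])
  | r'.+1 => fun x =>
      lext (fun p : seq A * 1.-tuple A =>
              tens_right (thead p.2) (dpow r' (gS p.1))) (dfree x)
  end.

Definition partial_pow (k : fieldType) (A : lmodType k) (r : nat)
  (C : SA A) : SAT A r :=
  qpi (@RelT k A r) (dpow r (qrepr C)).

Definition S_le (k : fieldType) (A : lmodType k) (r : nat) : SA A -> Prop :=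
  fun C => partial_pow r.+1 C = qpi (@RelT k A r.+1) 0.

Definition S_sum (k : fieldType) (A : lmodType k) (r : nat) : SA A -> Prop :=
  fun C => exists x : 'I_r.+1 -> FS A,
    (forall i : 'I_r.+1, Sn i (qpi (@RelS k A) (x i))) /\
    C = qpi (@RelS k A) (\sum_(i < r.+1) x i).

(* Let mulT : SA ⊗ A^⊗m → SA multiply out the tensor factors.  For a word w
   of length n, mulT (∂^m w) is the sum, over the ordered choices of m letters
   of w, of w with these letters moved to the end; in SA this is
   n (n-1) ⋯ (n-m+1) w.  So if ∂^(r+1) x = 0, then every homogeneous component
   x_n of x with n > r is killed by the falling factorial n^_(r+1), which is
   invertible in characteristic 0.  Conversely ∂^(r+1) kills every word of
   length at most r. *)

From HB Require Import structures.
From mathcomp Require Import all_boot all_order all_algebra.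
From mathcomp Require Import finmap.
From mathcomp.multinomials Require Import monalg.
From Stdlib Require Import ClassicalEpsilon FunctionalExtensionality.
From Stdlib Require Import PropExtensionality ProofIrrelevance.
(* Last, so that [span] is the one of Defs and not that of vector.v. *)
From Pilot Require Import Defs.

Set Implicit Arguments.
Unset Strict Implicit.
Unset Printing Implicit Defensive.

Import GRing.Theory.
Local Open Scope fset_scope.
Local Open Scope ring_scope.

Section LinearExtension.
Variables (k : fieldType) (K : choiceType) (V : lmodType k).
Implicit Types (h : K -> V) (g : {malg k[K]}).

Lemma lextEw h (d : {fset K}) g : msupp g `<=` d ->
  lext h g = \sum_(x <- d) g@_x *: h x.
Proof.
move=> le; rewrite /lext [LHS](big_fset_incl _ le) => //= x _ /mcoeff_outdom ->.
by rewrite scale0r.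
Qed.

Lemma lext_is_linear h : linear (lext h).
Proof.
move=> a g1 g2; set g := a *: g1 + g2.
pose d := msupp g1 `|` msupp g2 `|` msupp g.
rewrite (@lextEw h d g) ?fsubsetUr // (@lextEw h d g1) ?(@lextEw h d g2).
- rewrite scaler_sumr -big_split /=; apply: eq_bigr => x _.
  by rewrite mcoeffD mcoeffZ scalerDl scalerA.
- by rewrite /d -fsetUA fsubsetU // fsubsetUl orbT.
- by rewrite /d -fsetUA fsubsetUl.
Qed.

HB.instance Definition _ h :=
  GRing.isLinear.Build k {malg k[K]} V *:%R (lext h) (lext_is_linear h).

Lemma lextU h x : lext h << x >> = h x.
Proof. by rewrite (lextEw h msuppU_le) big_seq_fset1 mcoeffUU scale1r. Qed.

Lemma lext_malgU g : lext (fun x => << x >>) g = g.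
Proof.
rewrite {2}(monalgE g); apply: eq_bigr => x _.
by apply/malgP => y; rewrite mcoeffZ !mcoeffU mulr_natr.
Qed.

Lemma lext_sum_fun (I : Type) (s : seq I) (h : I -> K -> V) g :
  lext (fun x => \sum_(i <- s) h i x) g = \sum_(i <- s) lext (h i) g.
Proof. by rewrite exchange_big; apply: eq_bigr => x _; rewrite scaler_sumr. Qed.

End LinearExtension.

Section Span.
Variables (k : fieldType) (V : lmodType k).
Implicit Types G : V -> Prop.

Lemma span0 G : span G 0.
Proof. by exists [::]; rewrite big_nil. Qed.

Lemma span_gen G x : G x -> span G x.
Proof.
move=> Gx; exists [:: (1, x)]; rewrite big_seq1 scale1r.
by split=> // p /[!inE] /eqP->.
Qed.

Lemma spanZD G a x y : span G x -> span G y -> span G (a *: x + y).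
Proof.
move=> [s [Gs ->]] [t [Gt ->]].
exists ([seq (a * p.1, p.2) | p <- s] ++ t); split.
  by move=> p /[!mem_cat] /orP[/mapP[q /Gs ? ->]|/Gt].
rewrite big_cat big_map scaler_sumr; congr (_ + _).
by apply: eq_bigr => p _; rewrite scalerA.
Qed.

Lemma spanD G x y : span G x -> span G y -> span G (x + y).
Proof. by move=> Gx; rewrite -[x]scale1r; apply: spanZD. Qed.

Lemma spanZ G a x : span G x -> span G (a *: x).
Proof. by move=> Gx; rewrite -[_ *: _]addr0; apply: spanZD Gx (span0 _). Qed.

Lemma spanN G x : span G x -> span G (- x).
Proof. by rewrite -scaleN1r; apply: spanZ. Qed.

Lemma spanB G x y : span G x -> span G y -> span G (x - y).
Proof. by move=> Gx /spanN; apply: spanD. Qed.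

Lemma span_sum G (I : Type) (s : seq I) (P : pred I) (F : I -> V) :
  (forall i, P i -> span G (F i)) -> span G (\sum_(i <- s | P i) F i).
Proof.
move=> GF; elim/big_rec: _ => [|i x Pi Gx]; first exact: span0.
exact: spanD (GF i Pi) Gx.
Qed.

Lemma span_lext G (K : choiceType) (h : K -> V) g :
  (forall x, span G (h x)) -> span G (lext h g).
Proof. by move=> Gh; apply: span_sum => x _; apply: spanZ. Qed.

End Span.

Lemma span_linear (k : fieldType) (V W : lmodType k) (F : {linear V -> W})
    G (H : W -> Prop) x :
  (forall y, G y -> span H (F y)) -> span G x -> span H (F x).
Proof.
move=> GH [s [Gs ->]]; rewrite linear_sum big_seq; apply: span_sum => p /Gs Gp.
by rewrite linearZ; apply/spanZ/GH.
Qed.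

Lemma linear_span_eq0 (k : fieldType) (V W : lmodType k) (F : {linear V -> W})
    G x :
  (forall y, G y -> F y = 0) -> span G x -> F x = 0.
Proof.
move=> FG [s [Gs ->]]; rewrite linear_sum big_seq big1 // => p /Gs Gp.
by rewrite linearZ /= FG ?scaler0.
Qed.

Section Quotient.
Variables (k : fieldType) (V : lmodType k) (G : V -> Prop).
Local Notation W := (span G).

Lemma qpi_eqP (x y : V) : qpi W x = qpi W y <-> W (x - y).
Proof.
split=> [e | Wxy].
  have := f_equal (fun C : quot W => proj1_sig C x) e.
  by rewrite /= /coset subrr => <-; apply: span0.
apply: subset_eq_compat; apply: functional_extensionality => z.
apply: propositional_extensionality; rewrite /coset; split=> Wz.
  by rewrite -(subrKA x); apply: spanD.
by rewrite -(subrKA y) -(opprB x); apply: spanD Wz (spanN Wxy).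
Qed.

Lemma qreprK (C : quot W) : qpi W (qrepr C) = C.
Proof.
case: C => C0 HC; rewrite /qrepr /=.
case: (constructive_indefinite_description _ HC) => x /= e.
by apply: subset_eq_compat; rewrite e.
Qed.

End Quotient.

Section LinearModulo.
Variables (k : fieldType) (U V : lmodType k).

Definition linear_mod (W : V -> Prop) (S : U -> V) :=
  forall c a b, W (S (c *: a + b) - c *: S a - S b).

Variable G : V -> Prop.
Implicit Types S : U -> V.

Lemma linear_modD S1 S2 :
  linear_mod (span G) S1 -> linear_mod (span G) S2 ->
  linear_mod (span G) (fun y => S1 y + S2 y).
Proof.
move=> lin1 lin2 c a b; rewrite scalerDr !opprD.
rewrite [S1 _ + _ + _]addrACA [_ + (- S1 b - S2 b)]addrACA.
exact: spanD.
Qed.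

Lemma linear_mod_sum n (S : 'I_n -> U -> V) :
  (forall i, linear_mod (span G) (S i)) ->
  linear_mod (span G) (fun y => \sum_(i < n) S i y).
Proof.
move=> linS c a b; rewrite scaler_sumr -!sumrB.
by apply: span_sum => i _; apply: linS.
Qed.

End LinearModulo.

Section RemoveAt.
Variable T : Type.
Implicit Types u v w : seq T.

Lemma size_remove_at i w : (i < size w)%N -> size (remove_at i w) = (size w).-1.
Proof.
move=> ltiw; rewrite /remove_at size_cat size_take size_drop ltiw.
by case: (size w) ltiw => // n; rewrite ltnS subSS => /subnKC.
Qed.

Lemma remove_at_cat i u v :
  remove_at i (u ++ v) =
  if (i < size u)%N then remove_at i u ++ v else u ++ remove_at (i - size u) v.
Proof.
rewrite /remove_at take_cat drop_cat; case: (ltnP i (size u)) => iu.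
  case: (ltnP i.+1 (size u)) => iu'; first by rewrite catA.
  have -> : i.+1 = size u by apply/eqP; rewrite eqn_leq iu iu'.
  by rewrite subnn drop0 drop_size cats0.
by rewrite ltnNge (leq_trans iu) // subSn // catA.
Qed.

End RemoveAt.

Lemma perm_remove_at (T : eqType) (x0 : T) (w : seq T) i : (i < size w)%N ->
  perm_eq (nth x0 w i :: remove_at i w) w.
Proof.
move=> ltiw; rewrite -[X in perm_eq _ X](cat_take_drop i) (drop_nth x0 ltiw).
by rewrite -cat1s perm_catCA.
Qed.

Lemma perm_rem (T : eqType) (x : T) (s s' : seq T) :
  perm_eq s s' -> perm_eq (rem x s) (rem x s').
Proof.
move=> ss'; have [xs|xNs] := boolP (x \in s); last first.
  by rewrite !rem_id // -(perm_mem ss').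
have xs' : x \in s' by rewrite -(perm_mem ss').
by rewrite -(perm_cons x) -(permPl (perm_to_rem xs)) -(permPr (perm_to_rem xs')).
Qed.

Section SymmetricAlgebra.
Variables (k : fieldType) (A : lmodType k).
Local Notation R := (@RelS k A).
Local Notation RT m := (@RelT k A m).
Implicit Types (u v w s t : seq A) (a b : A) (c : k).

Lemma gT_tuple m w (t : m.-tuple A) : gT m w t = << (w, t) >>.
Proof. by rewrite /gT valK. Qed.

Lemma gT_size_neq m w t : size t != m -> gT m w t = 0.
Proof. by move=> St; rewrite /gT insubN. Qed.

Lemma lext_gT m (V : lmodType k) (h : seq A * m.-tuple A -> V) w t :
  lext h (gT m w t) = if insub t is Some u then h (w, u) else 0.
Proof. by rewrite /gT; case: insub => [u|]; rewrite ?lextU ?linear0. Qed.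

HB.instance Definition _ := GRing.Linear.copy (@dfree k A) (lext _).
HB.instance Definition _ m a :=
  GRing.Linear.copy (@tens_right k A m a) (lext _).

Lemma tens_right_gT m a w t :
  tens_right a (gT m w t) = gT m.+1 w (rcons t a).
Proof.
rewrite /tens_right lext_gT; case: insubP => [u _ <- | St] /=.
  by rewrite gT_tuple.
by rewrite gT_size_neq // size_rcons eqSS.
Qed.

Lemma dfree_gS w :
  dfree (gS w) = \sum_(i < size w) gT 1 (remove_at i w) [:: nth 0 w i].
Proof. exact: lextU. Qed.

Lemma dpow0_gS w : dpow 0 (gS w) = gT 0 w [::].
Proof. exact: lextU. Qed.

Lemma dpow_is_linear r : linear (@dpow k A r).
Proof. by elim: r => [|r IH] a x y /=; rewrite !linearP. Qed.

HB.instance Definition _ r := GRing.isLinear.Build k (FS A) (FT A r) *:%R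
  (@dpow k A r) (dpow_is_linear r).

Definition dpow_tensor r : FT A 1 -> FT A r.+1 :=
  lext (fun p : seq A * 1.-tuple A => tens_right (thead p.2) (dpow r (gS p.1))).

HB.instance Definition _ r :=
  GRing.Linear.copy (dpow_tensor r) (lext _).

Lemma dpowS r x : dpow r.+1 x = dpow_tensor r (dfree x).
Proof. by []. Qed.

Lemma dpow_tensor_gT r w a :
  dpow_tensor r (gT 1 w [:: a]) = tens_right a (dpow r (gS w)).
Proof. by rewrite [LHS]lext_gT insubT. Qed.

Lemma dpowS_gS r w : dpow r.+1 (gS w) =
  \sum_(i < size w) tens_right (nth 0 w i) (dpow r (gS (remove_at i w))).
Proof.
rewrite dpowS dfree_gS linear_sum.
by apply: eq_bigr => i _ /=; rewrite dpow_tensor_gT.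
Qed.

Lemma dpow_small r w : (size w <= r)%N -> dpow r.+1 (gS w) = 0.
Proof.
elim: r w => [|r IH] w Sw.
  by rewrite dpowS_gS; move: Sw; rewrite leqn0 => /eqP->; rewrite big_ord0.
rewrite dpowS_gS big1 // => i _; rewrite IH ?linear0 //.
by rewrite size_remove_at // -ltnS prednK // (leq_ltn_trans _ (ltn_ord i)).
Qed.

Lemma tens_right_rel m a x : RT m x -> RT m.+1 (tens_right a x).
Proof.
apply: span_linear => _ [[t [u [v [a' [b [c ->]]]]]] |
  [[w [u [v [a' [b [c ->]]]]]] | [s [s' [t [ss' ->]]]]]].
- rewrite !linearB linearZ /= !tens_right_gT.
  by apply: span_gen; left; exists (rcons t a), u, v, a', b, c.
- rewrite !linearB linearZ /= !tens_right_gT.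
  apply: span_gen; right; left; exists w, u, (rcons v a), a', b, c.
  by rewrite !rcons_cat.
- rewrite linearB /= !tens_right_gT.
  by apply: span_gen; right; right; exists s, s', (rcons t a).
Qed.

Lemma tens_right_linear_mod m (y : FT A m) :
  linear_mod (RT m.+1) (fun a => tens_right a y).
Proof.
move=> c a b; rewrite /tens_right /lext scaler_sumr -!sumrB.
apply: span_sum => p _; rewrite scalerA mulrC -scalerA -!scalerBr; apply: spanZ.
apply: span_gen; right; left.
by exists p.1, (val p.2), [::], a, b, c; rewrite !cats1.
Qed.

Lemma dfree_split u y v : dfree (gS (u ++ y :: v)) =
  \sum_(i < size u) gT 1 (remove_at i u ++ y :: v) [:: nth 0 u i]
  + gT 1 (u ++ v) [:: y]
  + \sum_(j < size v) gT 1 (u ++ y :: remove_at j v) [:: nth 0 v j].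
Proof.
rewrite dfree_gS size_cat big_split_ord /= big_ord_recl /= addrA addn0.
rewrite remove_at_cat nth_cat ltnn subnn.
have -> : remove_at 0 (y :: v) = v by rewrite /remove_at /= drop0.
under eq_bigr => i _ do rewrite remove_at_cat nth_cat ltn_ord.
under [X in _ + X]eq_bigr => j _ do
  rewrite remove_at_cat nth_cat ltnNge leq_addr /= addKn /bump add1n.
by [].
Qed.

Lemma dfree_linear_mod u v : linear_mod (RT 1) (fun y => dfree (gS (u ++ y :: v))).
Proof.
move=> c a b; rewrite !dfree_split.
have lin_rhs : linear_mod (RT 1) (fun y =>
    \sum_(i < size u) gT 1 (remove_at i u ++ y :: v) [:: nth 0 u i]
    + gT 1 (u ++ v) [:: y]
    + \sum_(j < size v) gT 1 (u ++ y :: remove_at j v) [:: nth 0 v j]).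
  apply: linear_modD; first apply: linear_modD.
  - apply: linear_mod_sum => i c' a' b'; apply: span_gen; left.
    by exists [:: nth 0 u i], (remove_at i u), v, a', b', c'.
  - move=> c' a' b'; apply: span_gen; right; left.
    by exists (u ++ v), [::], [::], a', b', c'.
  - apply: linear_mod_sum => j c' a' b'; apply: span_gen; left.
    by exists [:: nth 0 v j], u, (remove_at j v), a', b', c'.
exact: lin_rhs.
Qed.

Lemma dfree_rem s : RT 1 (dfree (gS s) - \sum_(x <- s) gT 1 (rem x s) [:: x]).
Proof.
rewrite dfree_gS (big_nth 0) big_mkord -sumrB; apply: span_sum => i _.
apply: span_gen; right; right.
exists (remove_at i s), (rem (nth 0 s i) s), [:: nth 0 s i]; split => //.
rewrite -(perm_cons (nth 0 s i)) (permPl (perm_remove_at 0 (ltn_ord i))).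
exact/perm_to_rem/mem_nth.
Qed.

Lemma dfree_perm s s' : perm_eq s s' -> RT 1 (dfree (gS s) - dfree (gS s')).
Proof.
move=> ss'; set S := fun s => \sum_(x <- s) gT 1 (rem x s) [:: x].
have RS : RT 1 (S s - S s').
  rewrite /S -(perm_big _ ss') /= big_seq [X in _ - X]big_seq -sumrB.
  apply: span_sum => z _; apply: span_gen; right; right.
  by exists (rem z s), (rem z s'), [:: z]; rewrite perm_rem.
have := spanD (spanB (dfree_rem s) (dfree_rem s')) RS.
by rewrite opprB addrAC !subrKA.
Qed.

Lemma dfree_rel x : R x -> RT 1 (dfree x).
Proof.
apply: span_linear => _ [[u [v [a [b [c ->]]]]] | [s [s' [ss' ->]]]].
  by rewrite !linearB linearZ; apply: dfree_linear_mod.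
by rewrite linearB; apply: dfree_perm.
Qed.

Lemma dpow_tensor_rel r :
  (forall x, R x -> RT r (dpow r x)) ->
  forall y, RT 1 y -> RT r.+1 (dpow_tensor r y).
Proof.
move=> dpow_r_rel y; apply: span_linear => _ [[t [u [v [a [b [c ->]]]]]] |
  [[w [u [v [a [b [c ->]]]]]] | [s [s' [t [ss' ->]]]]]].
- have [|St] := eqVneq (size t) 1; last first.
    by rewrite !gT_size_neq // scaler0 !subr0 linear0; apply: span0.
  case: t => [|a0 []] // _; rewrite !linearB linearZ /= !dpow_tensor_gT.
  rewrite -linearZ -!linearB; apply: tens_right_rel.
  rewrite -linearZ -!linearB; apply: dpow_r_rel.
  by apply: span_gen; left; exists u, v, a, b, c.
- have [uv0|uvN0] := eqVneq (u ++ v) [::].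
    move/eqP: uv0; rewrite -size_eq0 size_cat addn_eq0 !size_eq0.
    move=> /andP[/eqP-> /eqP->].
    by rewrite !linearB linearZ /= !dpow_tensor_gT; apply: tens_right_linear_mod.
  have Sneq y' : size (u ++ y' :: v) != 1.
    by rewrite size_cat /= addnS eqSS -size_cat size_eq0.
  by rewrite !gT_size_neq ?Sneq // scaler0 !subr0 linear0; apply: span0.
- have [|St] := eqVneq (size t) 1; last first.
    by rewrite !gT_size_neq // subr0 linear0; apply: span0.
  case: t => [|a0 []] // _; rewrite linearB /= !dpow_tensor_gT -linearB.
  apply: tens_right_rel; rewrite -linearB; apply: dpow_r_rel.
  by apply: span_gen; right; exists s, s'.
Qed.

Lemma dpow_rel r x : R x -> RT r (dpow r x).
Proof.
elim: r x => [|r IH] x Rx; last by rewrite dpowS; apply/dpow_tensor_rel/dfree_rel.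
rewrite /=; apply: span_linear Rx => _ [[u [v [a [b [c ->]]]]] | [s [s' [ss' ->]]]].
  rewrite !linearB linearZ /= !lextU.
  by apply: span_gen; left; exists [::], u, v, a, b, c.
rewrite linearB /= !lextU.
by apply: span_gen; right; right; exists s, s', [::].
Qed.

Definition mulT m : FT A m -> FS A :=
  lext (fun p : seq A * m.-tuple A => gS (p.1 ++ p.2)).
Definition mulSr a : FS A -> FS A := lext (fun w => gS (rcons w a)).
Definition hcomp n : FS A -> FS A :=
  lext (fun w => if size w == n then gS w else 0).

HB.instance Definition _ m := GRing.Linear.copy (@mulT m) (lext _).
HB.instance Definition _ a := GRing.Linear.copy (mulSr a) (lext _).
HB.instance Definition _ n := GRing.Linear.copy (hcomp n) (lext _).

Lemma mulT_gT m w t :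
  mulT (gT m w t) = if size t == m then gS (w ++ t) else 0.
Proof.
rewrite /mulT lext_gT; case: insubP => [u _ <- | /negbTE-> //].
by rewrite size_tuple eqxx.
Qed.

Lemma mulSr_gS a w : mulSr a (gS w) = gS (rcons w a).
Proof. exact: lextU. Qed.

Lemma hcomp_gS n w : hcomp n (gS w) = if size w == n then gS w else 0.
Proof. exact: lextU. Qed.

Lemma mulT_rel m x : RT m x -> R (mulT x).
Proof.
apply: span_linear => _ [[t [u [v [a [b [c ->]]]]]] |
  [[w [u [v [a [b [c ->]]]]]] | [s [s' [t [ss' ->]]]]]].
- rewrite !linearB linearZ /= !mulT_gT.
  case: eqP => _; last by rewrite scaler0 !subr0; apply: span0.
  by apply: span_gen; left; exists u, (v ++ t), a, b, c; rewrite -!catA.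
- rewrite !linearB linearZ /= !mulT_gT !size_cat /=.
  case: eqP => _; last by rewrite scaler0 !subr0; apply: span0.
  by apply: span_gen; left; exists (w ++ u), v, a, b, c; rewrite !catA.
- rewrite linearB /= !mulT_gT.
  case: eqP => _; last by rewrite subr0; apply: span0.
  by apply: span_gen; right; exists (s ++ t), (s' ++ t); rewrite perm_cat2r.
Qed.

Lemma mulSr_rel a x : R x -> R (mulSr a x).
Proof.
apply: span_linear => _ [[u [v [a' [b [c ->]]]]] | [s [s' [ss' ->]]]].
  rewrite !linearB linearZ /= !mulSr_gS.
  by apply: span_gen; left; exists u, (rcons v a), a', b, c; rewrite !rcons_cat.
rewrite linearB /= !mulSr_gS; apply: span_gen; right.
by exists (rcons s a), (rcons s' a); rewrite -!cats1 perm_cat2r.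
Qed.

Lemma hcomp_rel n x : R x -> R (hcomp n x).
Proof.
apply: span_linear => _ [[u [v [a [b [c ->]]]]] | [s [s' [ss' ->]]]].
  rewrite !linearB linearZ /= !hcomp_gS !size_cat /=.
  case: eqP => _; last by rewrite scaler0 !subr0; apply: span0.
  by apply: span_gen; left; exists u, v, a, b, c.
rewrite linearB /= !hcomp_gS (perm_size ss').
case: eqP => _; last by rewrite subr0; apply: span0.
by apply: span_gen; right; exists s, s'.
Qed.

Lemma mulT_tens_right m a (y : FT A m) :
  mulT (tens_right a y) = mulSr a (mulT y).
Proof.
rewrite [in RHS]/mulT /tens_right /lext !linear_sum; apply: eq_bigr => p _.
by rewrite !linearZ /= mulT_gT mulSr_gS size_rcons size_tuple eqxx rcons_cat.
Qed.

Lemma mulT_dpow_gS m w :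
  R (mulT (dpow m (gS w)) - ((size w) ^_ m)%:R *: gS w).
Proof.
elim: m w => [|m IH] w.
  by rewrite dpow0_gS mulT_gT /= cats0 ffactn0 scale1r subrr; apply: span0.
rewrite dpowS_gS linear_sum /=.
under eq_bigr do rewrite mulT_tens_right.
set f : k := ((size w).-1 ^_ m)%:R.
have -> : \sum_(i < size w) mulSr (nth 0 w i) (mulT (dpow m (gS (remove_at i w))))
    - ((size w) ^_ m.+1)%:R *: gS w
  = \sum_(i < size w) (mulSr (nth 0 w i) (mulT (dpow m (gS (remove_at i w)))
                         - f *: gS (remove_at i w))
       + f *: (gS (rcons (remove_at i w) (nth 0 w i)) - gS w)).
  rewrite big_split /=.
  under [X in _ = X + _]eq_bigr do rewrite linearB linearZ /= mulSr_gS.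
  rewrite sumrB -!scaler_sumr sumrB sumr_const card_ord ffactnS natrM -/f.
  by rewrite scalerBr addrA subrK -scaler_nat scalerA mulrC.
apply: span_sum => i _; apply: spanD.
  by apply: mulSr_rel; move: (IH (remove_at i w)); rewrite size_remove_at.
apply/spanZ/span_gen; right; exists (rcons (remove_at i w) (nth 0 w i)), w.
by rewrite perm_rcons perm_remove_at.
Qed.

Lemma mulT_dpow_rel m x :
  R (mulT (dpow m x) - lext (fun w => ((size w) ^_ m)%:R *: gS w) x).
Proof.
rewrite -{1}[x]lext_malgU /lext !linear_sum -big_split /=; apply: span_sum => w _.
by rewrite !linearZ /= !scalerN -scalerBr; apply/spanZ/mulT_dpow_gS.
Qed.

Lemma hcomp_lext_size (f : nat -> k) n x :
  hcomp n (lext (fun w => f (size w) *: gS w) x) = f n *: hcomp n x.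
Proof.
rewrite [in LHS]/lext linear_sum [in RHS]/hcomp /lext scaler_sumr.
apply: eq_bigr => w _; rewrite !linearZ /= hcomp_gS.
by case: eqP => [<-|_]; rewrite ?scaler0 // !scalerA mulrC.
Qed.

Lemma hcomp_high_rel r x : [pchar k] =i pred0 ->
  RT r.+1 (dpow r.+1 x) -> forall n, (r < n)%N -> R (hcomp n x).
Proof.
move=> /pcharf0P char0 Rx n ltrn.
have := hcomp_rel n (spanB (mulT_rel Rx) (mulT_dpow_rel r.+1 x)).
rewrite subKr (hcomp_lext_size (fun i => (i ^_ r.+1)%:R)).
move=> /(spanZ ((n ^_ r.+1)%:R^-1)).
by rewrite scalerA mulVf ?scale1r // char0 -lt0n ffact_gt0.
Qed.

Lemma hcomp_sum N x : (forall w, w \in msupp x -> size w < N)%N ->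
  \sum_(n < N) hcomp n x = x.
Proof.
move=> ltN; rewrite -lext_sum_fun -[RHS]lext_malgU /lext big_seq [RHS]big_seq.
apply: eq_bigr => w /ltN ltwN; congr (_ *: _).
by rewrite -big_mkcond (big_pred1 (Ordinal ltwN)) // => n; rewrite eq_sym.
Qed.

Lemma sub_sum_hcomp_rel r x : (forall n, (r < n)%N -> R (hcomp n x)) ->
  R (x - \sum_(i < r.+1) hcomp i x).
Proof.
move=> high; pose M := \max_(w <- msupp x) size w.
rewrite -{1}(@hcomp_sum (r.+1 + M) x); last first.
  move=> w wc; rewrite addSn ltnS (leq_trans _ (leq_addl r M)) //.
  exact: leq_bigmax_seq.
rewrite big_split_ord /= addrAC subrr add0r.
by apply: span_sum => j _; apply: high; rewrite /= ltnS leq_addr.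
Qed.

Lemma Sn_hcomp n x : Sn n (qpi R (hcomp n x)).
Proof.
exists (hcomp n x); split => //; apply: span_lext => w.
by case: eqP => [<-|_]; [apply: span_gen; exists w | apply: span0].
Qed.

Lemma dpow_Sn r i x : (i <= r)%N -> Sn i (qpi R x) -> RT r.+1 (dpow r.+1 x).
Proof.
move=> le_ir [y [Gy /qpi_eqP Rxy]].
have dpow_y : dpow r.+1 y = 0.
  by apply: linear_span_eq0 Gy => _ [w [Sw ->]]; apply: dpow_small; rewrite Sw.
have -> : dpow r.+1 x = dpow r.+1 (x - y) + dpow r.+1 y by rewrite -linearD subrK.
by rewrite dpow_y addr0; apply: dpow_rel.
Qed.

Lemma S_leP r (C : SA A) : S_le r C <-> RT r.+1 (dpow r.+1 (qrepr C)).
Proof.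
rewrite /S_le /partial_pow; split => [/qpi_eqP | ?]; first by rewrite subr0.
by apply/qpi_eqP; rewrite subr0.
Qed.

End SymmetricAlgebra.

Theorem proposition7p3 (k : fieldType) (A : lmodType k) :
  [pchar k]%R =i pred0 ->
  forall (r : nat) (C : SA A), S_le r C <-> S_sum r C.
Proof.
move=> char0 r C; split => [/S_leP Rc | [x [Sx ->]]].
  exists (fun i : 'I_r.+1 => hcomp i (qrepr C)).
  split => [i|]; first exact: Sn_hcomp.
  rewrite -[C in LHS]qreprK; apply/qpi_eqP/sub_sum_hcomp_rel => n.
  exact: hcomp_high_rel.
apply/S_leP; set c := qrepr _.
have /qpi_eqP Rc : qpi (@RelS k A) c = qpi (@RelS k A) (\sum_i x i).
  by rewrite qreprK.
have -> : dpow r.+1 c = dpow r.+1 (c - \sum_i x i) + \sum_i dpow r.+1 (x i).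
  by rewrite -linear_sum -linearD subrK.
apply: spanD; first exact: dpow_rel.
by apply: span_sum => i _; apply: (dpow_Sn _ (Sx i)); rewrite -ltnS.
Qed.
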